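(* Let $\pi>0$, $\bar d>0$, $0<\theta_1<\dots<\theta_K$, $0\le\beta_1<\dots<\beta_M\le1$, and let $A:[0,D]\to[0,\bar d]$ be continuously differentiable and decreasing. Let $\sigma(Q,\beta,\theta)=-[\theta\beta+\pi(1-\beta)]A'(Q)$ and enumerate the $KM$ types as $\Lambda_1,\dots,\Lambda_{KM}$ with $\sigma(Q,\Lambda_1)\le\dots\le\sigma(Q,\Lambda_{KM})$ for all $Q$. Let $L(Q,\beta,\theta)=\theta[\bar d-\beta A(Q)]-\pi(1-\beta)A(Q)$ and $\bar S(Q,\Pi,\Lambda)=L(Q,\Lambda)-\Pi$. Say items $\phi_i=(Q_i,\Pi_i)$ and $\phi_j=(Q_j,\Pi_j)$ are pairwise incentive compatible if $\bar S(Q_i,\Pi_i,\Lambda_i)\ge\bar S(Q_j,\Pi_j,\Lambda_i)$ and $\bar S(Q_j,\Pi_j,\Lambda_j)\ge\bar S(Q_i,\Pi_i,\Lambda_j)$. Let $\{(Q_i,\Pi_i)\}_{i=1}^{KM}$ with $Q_i\in[0,D]$ satisfy $Q_1\le\dots\le Q_{KM}$ and $\Pi_1\le\dots\le\Pi_{KM}$. Then for any $i_1<i_2<i_3$: if $\phi_{i_1},\phi_{i_2}$ are pairwise incentive compatible and $\phi_{i_2},\phi_{i_3}$ are pairwise incentive compatible, then $\phi_{i_1},\phi_{i_3}$ are pairwise incentive compatible.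
   Context: Model: an operator offers one contract item (data cap $Q_i$, fee $\Pi_i$) for each user type $\Lambda_i=(\beta,\theta)$ (network substitutability $\beta$, data valuation $\theta$). $\pi$ is the overage price, $\bar d$ the mean demand, $A(Q)$ the expected overage consumption under cap $Q$ (decreasing, convex). $\sigma$ is the willingness-to-pay, by which types are sorted (the ordering does not depend on $Q$). *)

From Stdlib Require Import Reals Lra.
Open Scope R_scope.

Definition has_derivative_on (A A' : R -> R) (a b : R) : Prop :=
  forall x, a <= x <= b ->
  forall eps, 0 < eps -> exists delta, 0 < delta /\
    forall y, a <= y <= b -> y <> x -> Rabs (y - x) < delta ->
      Rabs ((A y - A x) / (y - x) - A' x) < eps.

Definition continuous_on_interval (f : R -> R) (a b : R) : Prop :=
  forall x, a <= x <= b ->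
  forall eps, 0 < eps -> exists delta, 0 < delta /\
    forall y, a <= y <= b -> Rabs (y - x) < delta -> Rabs (f y - f x) < eps.

Definition C1_on (A A' : R -> R) (a b : R) : Prop :=
  has_derivative_on A A' a b /\ continuous_on_interval A' a b.

Definition wtp_sigma (pi : R) (A' : R -> R) (Q beta theta : R) : R :=
  - (theta * beta + pi * (1 - beta)) * A' Q.

Definition Lval (pi dbar : R) (A : R -> R) (Q beta theta : R) : R :=
  theta * (dbar - beta * A Q) - pi * (1 - beta) * A Q.

Definition Sbar (pi dbar : R) (A : R -> R) (Q Pi beta theta : R) : R :=
  Lval pi dbar A Q beta theta - Pi.

(* pairwise incentive compatibility of items i and j, where item k is
   (Q k, P k) and type k is (be k, th k) *)
Definition pairwise_IC (pi dbar : R) (A : R -> R) (Q P be th : nat -> R)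
  (i j : nat) : Prop :=
  Sbar pi dbar A (Q i) (P i) (be i) (th i) >= Sbar pi dbar A (Q j) (P j) (be i) (th i) /\
  Sbar pi dbar A (Q j) (P j) (be j) (th j) >= Sbar pi dbar A (Q i) (P i) (be j) (th j).

(* Item k gives type k the surplus  theta_k dbar - c_k A(Q_k) - Pi_k,  where
   c_k = theta_k beta_k + pi (1 - beta_k)  and  sigma(Q, Lambda_k) = - c_k A'(Q).
   Adding the two adjacent downward (resp. upward) constraints yields the
   constraint between i1 and i3 up to the error term  (c_i2 - c_i1)(A(Q_i2) - A(Q_i3))
   (resp.  (c_i3 - c_i2)(A(Q_i1) - A(Q_i2))),  which must be shown nonnegative.
   It vanishes unless A strictly drops between the two caps; then the mean value
   theorem gives a point where A' < 0, and there the ordering of the types by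
   willingness to pay is exactly the ordering of the weights c_k. *)

From Stdlib Require Import Reals Lra Lia.
From Coquelicot Require Import Coquelicot.
Open Scope R_scope.

Definition overage_weight (pi beta theta : R) : R := theta * beta + pi * (1 - beta).

Lemma Sbar_affine (pi dbar : R) (A : R -> R) (q p beta theta : R) :
  Sbar pi dbar A q p beta theta = theta * dbar - overage_weight pi beta theta * A q - p.
Proof. unfold Sbar, Lval, overage_weight; ring. Qed.

Lemma wtp_sigma_overage_weight (pi : R) (A' : R -> R) (q beta theta : R) :
  wtp_sigma pi A' q beta theta = - overage_weight pi beta theta * A' q.
Proof. reflexivity. Qed.

Lemma pairwise_IC_transitive_affine (v1 v2 v3 c1 c2 c3 a1 a2 a3 p1 p2 p3 : R) :
  0 <= (c2 - c1) * (a2 - a3) -> 0 <= (c3 - c2) * (a1 - a2) ->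
  v1 - c1 * a1 - p1 >= v1 - c1 * a2 - p2 -> v2 - c2 * a2 - p2 >= v2 - c2 * a1 - p1 ->
  v2 - c2 * a2 - p2 >= v2 - c2 * a3 - p3 -> v3 - c3 * a3 - p3 >= v3 - c3 * a2 - p2 ->
  v1 - c1 * a1 - p1 >= v1 - c1 * a3 - p3 /\ v3 - c3 * a3 - p3 >= v3 - c3 * a1 - p1.
Proof. intros; split; nra. Qed.

Lemma Rle_chain_upto (f : nat -> R) (n : nat) :
  (forall i, (S i < n)%nat -> f i <= f (S i)) ->
  forall i j, (i <= j)%nat -> (j < n)%nat -> f i <= f j.
Proof.
  intros Hstep i j Hij; induction Hij as [|j Hij IH]; intros Hj; [lra|].
  apply Rle_trans with (f j); [apply IH; lia | apply Hstep; lia].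
Qed.

Section Clamp.

Variables a b : R.
Hypothesis Hab : a <= b.

Definition clamp (x : R) : R := Rmax a (Rmin b x).

Lemma clamp_in x : a <= clamp x <= b.
Proof. unfold clamp, Rmax, Rmin; repeat destruct Rle_dec; lra. Qed.

Lemma clamp_id x : a <= x <= b -> clamp x = x.
Proof. intros; unfold clamp, Rmax, Rmin; repeat destruct Rle_dec; lra. Qed.

Lemma clamp_1_lipschitz x y : Rabs (clamp y - clamp x) <= Rabs (y - x).
Proof.
  unfold clamp, Rmax, Rmin; repeat destruct Rle_dec;
  unfold Rabs; repeat destruct Rcase_abs; lra.
Qed.

Lemma continuity_pt_clamp_comp (f : R -> R) (t : R) :
  continuous_on_interval f a b -> continuity_pt (fun x => f (clamp x)) t.
Proof.
  intros Hf eps Heps.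
  destruct (Hf (clamp t) (clamp_in t) eps Heps) as [d [Hd Hnear]].
  exists d; split; [exact Hd|].
  intros y [_ Hy]; simpl in *; unfold R_dist in *.
  apply Hnear; [apply clamp_in|].
  eapply Rle_lt_trans; [apply clamp_1_lipschitz | exact Hy].
Qed.

End Clamp.

Section DerivativeOnInterval.

Variables (A A' : R -> R) (a b : R).
Hypothesis HA : has_derivative_on A A' a b.

Lemma has_derivative_on_subinterval (c d : R) :
  a <= c -> d <= b -> has_derivative_on A A' c d.
Proof.
  intros Hac Hdb x Hx eps Heps.
  destruct (HA x ltac:(lra) eps Heps) as [delta [Hdelta Hnear]].
  exists delta; split; [exact Hdelta|].
  intros y Hy; apply Hnear; lra.
Qed.

(* The difference quotient stays within 1 of A' x, so |A y - A x| <= (|A' x| + 1) |y - x|. *)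
Lemma has_derivative_on_continuous : continuous_on_interval A a b.
Proof.
  intros x Hx eps Heps.
  destruct (HA x Hx 1 Rlt_0_1) as [d [Hd Hnear]].
  set (L := Rabs (A' x) + 1).
  assert (HL : 0 < L) by (pose proof (Rabs_pos (A' x)); unfold L; lra).
  exists (Rmin d (eps / L)); split.
  { apply Rmin_pos; [lra | apply Rdiv_lt_0_compat; lra]. }
  intros y Hy Hyx.
  destruct (Req_dec y x) as [->|Hne].
  { rewrite Rminus_diag, Rabs_R0; lra. }
  assert (Hyx_d : Rabs (y - x) < d) by (eapply Rlt_le_trans; [exact Hyx | apply Rmin_l]).
  assert (Hyx_eps : Rabs (y - x) < eps / L) by (eapply Rlt_le_trans; [exact Hyx | apply Rmin_r]).
  assert (Hquot : Rabs ((A y - A x) / (y - x)) < L).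
  { pose proof (Hnear y Hy Hne Hyx_d).
    pose proof (Rabs_triang ((A y - A x) / (y - x) - A' x) (A' x)).
    replace ((A y - A x) / (y - x) - A' x + A' x) with ((A y - A x) / (y - x)) in * by ring.
    unfold L; lra. }
  assert (Hyx0 : 0 < Rabs (y - x)) by (apply Rabs_pos_lt; lra).
  replace (A y - A x) with ((A y - A x) / (y - x) * (y - x)) by (field; lra).
  rewrite Rabs_mult.
  apply Rlt_trans with (L * Rabs (y - x)); [now apply Rmult_lt_compat_r|].
  apply (Rmult_lt_compat_l L) in Hyx_eps; [|exact HL].
  replace (L * (eps / L)) with eps in Hyx_eps by (field; lra).
  exact Hyx_eps.
Qed.

Lemma has_derivative_on_is_derive (x : R) : a < x < b -> is_derive A x (A' x).
Proof.
  intros Hx; apply is_derive_Reals; intros eps Heps.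
  destruct (HA x ltac:(lra) eps Heps) as [d [Hd Hnear]].
  assert (Hr : 0 < Rmin d (Rmin (x - a) (b - x))) by (repeat apply Rmin_pos; lra).
  exists (mkposreal _ Hr); intros h Hh0 Hh; simpl in Hh.
  pose proof (Rmin_l d (Rmin (x - a) (b - x))).
  pose proof (Rmin_r d (Rmin (x - a) (b - x))).
  pose proof (Rmin_l (x - a) (b - x)). pose proof (Rmin_r (x - a) (b - x)).
  assert (Hh_range : - (x - a) < h < b - x) by (unfold Rabs in Hh; destruct Rcase_abs; lra).
  specialize (Hnear (x + h) ltac:(lra) ltac:(lra)).
  replace (x + h - x) with h in Hnear by ring.
  apply Hnear; lra.
Qed.

(* A is extended by constants outside [a, b], which makes it continuous on all of R
   as Coquelicot's mean value theorem requires. *)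
Lemma mean_value_on_interval :
  a < b -> exists c, a <= c <= b /\ A b - A a = A' c * (b - a).
Proof.
  intros Hab.
  destruct (MVT_gen (fun x => A (clamp a b x)) a b A') as [c [Hc Hmv]].
  - rewrite Rmin_left, Rmax_right by lra; intros x Hx.
    apply (is_derive_ext_loc A); [|now apply has_derivative_on_is_derive].
    assert (Hr : 0 < Rmin (x - a) (b - x)) by (apply Rmin_pos; lra).
    exists (mkposreal _ Hr); intros y Hy.
    change (Rabs (y - x) < Rmin (x - a) (b - x)) in Hy.
    pose proof (Rmin_l (x - a) (b - x)). pose proof (Rmin_r (x - a) (b - x)).
    rewrite clamp_id; [reflexivity | lra |].
    unfold Rabs in Hy; destruct Rcase_abs; lra.
  - intros x _; apply continuity_pt_clamp_comp; [lra|].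
    exact has_derivative_on_continuous.
  - rewrite Rmin_left, Rmax_right in Hc by lra.
    rewrite !clamp_id in Hmv by lra.
    now exists c.
Qed.

End DerivativeOnInterval.

Lemma strict_decrease_neg_derivative (A A' : R -> R) (a b x y : R) :
  has_derivative_on A A' a b -> a <= x -> x < y -> y <= b -> A y < A x ->
  exists c, a <= c <= b /\ A' c < 0.
Proof.
  intros HA Hax Hxy Hyb Hdrop.
  destruct (mean_value_on_interval A A' x y) as [c [Hc Hmv]];
    [exact (has_derivative_on_subinterval A A' a b HA x y Hax Hyb) | exact Hxy |].
  exists c; split; [lra|].
  destruct (Rlt_le_dec (A' c) 0) as [Hneg | Hnonneg]; [exact Hneg|].
  assert (0 <= A' c * (y - x)) by (apply Rmult_le_pos; lra).
  lra.
Qed.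

Lemma overage_weight_le_of_wtp_le (pi : R) (A' : R -> R) (q beta1 theta1 beta2 theta2 : R) :
  A' q < 0 -> wtp_sigma pi A' q beta1 theta1 <= wtp_sigma pi A' q beta2 theta2 ->
  overage_weight pi beta1 theta1 <= overage_weight pi beta2 theta2.
Proof.
  rewrite !wtp_sigma_overage_weight; intros Hneg Hle.
  apply Rmult_le_reg_r with (- A' q); lra.
Qed.

Lemma weight_gap_mul_drop_nonneg (A A' : R -> R) (D : R) (w : nat -> R) (n : nat) :
  has_derivative_on A A' 0 D ->
  (forall x y, 0 <= x <= D -> 0 <= y <= D -> x <= y -> A y <= A x) ->
  (forall q, 0 <= q <= D -> A' q < 0 -> forall i, (S i < n)%nat -> w i <= w (S i)) ->
  forall i j u v, (i <= j)%nat -> (j < n)%nat -> 0 <= u -> u <= v -> v <= D ->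
  0 <= (w j - w i) * (A u - A v).
Proof.
  intros HA Hanti Hsorted i j u v Hij Hj Hu Huv Hv.
  assert (Hdrop : A v <= A u) by (apply Hanti; lra).
  destruct (Req_dec (A v) (A u)) as [Heq | Hne].
  { rewrite Heq; lra. }
  assert (Hlt : u < v) by (destruct (Req_dec u v) as [->|]; lra).
  destruct (strict_decrease_neg_derivative A A' 0 D u v HA Hu Hlt Hv ltac:(lra))
    as [c [Hc Hneg]].
  assert (w i <= w j) by exact (Rle_chain_upto w n (Hsorted c Hc Hneg) i j Hij Hj).
  apply Rmult_le_pos; lra.
Qed.

Theorem lemma5 (pi dbar D : R) (K M : nat) (theta beta : nat -> R)
  (A A' : R -> R) (tK tM : nat -> nat) (Q P : nat -> R) :
  0 < pi -> 0 < dbar ->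
  (K > 0)%nat -> 0 < theta 0%nat ->
  (forall k, (S k < K)%nat -> theta k < theta (S k)) ->
  (M > 0)%nat -> 0 <= beta 0%nat -> beta (pred M) <= 1 ->
  (forall m, (S m < M)%nat -> beta m < beta (S m)) ->
  C1_on A A' 0 D ->
  (forall x, 0 <= x <= D -> 0 <= A x <= dbar) ->
  (forall x y, 0 <= x <= D -> 0 <= y <= D -> x <= y -> A y <= A x) ->
  (* enumeration of the K*M types *)
  (forall i, (i < K * M)%nat -> (tK i < K)%nat /\ (tM i < M)%nat) ->
  (forall i j, (i < K * M)%nat -> (j < K * M)%nat ->
     tK i = tK j -> tM i = tM j -> i = j) ->
  (forall k m, (k < K)%nat -> (m < M)%nat ->
     exists i, (i < K * M)%nat /\ tK i = k /\ tM i = m) ->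
  (* sorted by willingness to pay, for all Q *)
  (forall q i, 0 <= q <= D -> (S i < K * M)%nat ->
     wtp_sigma pi A' q (beta (tM i)) (theta (tK i))
       <= wtp_sigma pi A' q (beta (tM (S i))) (theta (tK (S i)))) ->
  (* the contract items *)
  (forall i, (i < K * M)%nat -> 0 <= Q i <= D) ->
  (forall i, (S i < K * M)%nat -> Q i <= Q (S i)) ->
  (forall i, (S i < K * M)%nat -> P i <= P (S i)) ->
  forall i1 i2 i3, (i1 < i2)%nat -> (i2 < i3)%nat -> (i3 < K * M)%nat ->
  pairwise_IC pi dbar A Q P (fun i => beta (tM i)) (fun i => theta (tK i)) i1 i2 ->
  pairwise_IC pi dbar A Q P (fun i => beta (tM i)) (fun i => theta (tK i)) i2 i3 ->
  pairwise_IC pi dbar A Q P (fun i => beta (tM i)) (fun i => theta (tK i)) i1 i3.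
Proof.
  intros _ _ _ _ _ _ _ _ _ [HA _] _ Hanti _ _ _ Hsort HQ HQsorted _
    i1 i2 i3 H12 H23 H3 [IC12 IC21] [IC23 IC32].
  set (w i := overage_weight pi (beta (tM i)) (theta (tK i))).
  assert (Hw : forall q, 0 <= q <= D -> A' q < 0 ->
             forall i, (S i < K * M)%nat -> w i <= w (S i)).
  { intros q Hq Hneg i Hi.
    eapply overage_weight_le_of_wtp_le; [exact Hneg | exact (Hsort q i Hq Hi)]. }
  pose proof (weight_gap_mul_drop_nonneg A A' D w (K * M) HA Hanti Hw) as Hgap.
  pose proof (Rle_chain_upto Q (K * M) HQsorted) as HQle.
  pose proof (HQ i1 ltac:(lia)); pose proof (HQ i2 ltac:(lia)); pose proof (HQ i3 ltac:(lia)).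
  unfold pairwise_IC in *; rewrite !Sbar_affine in *.
  apply pairwise_IC_transitive_affine with
    (v2 := theta (tK i2) * dbar) (c2 := w i2) (a2 := A (Q i2)) (p2 := P i2);
    try assumption.
  - apply Hgap; [lia | lia | lra | apply HQle; lia | lra].
  - apply Hgap; [lia | lia | lra | apply HQle; lia | lra].
Qed.
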